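(* Let $(\mathbf X,\mathbf Y)$ be a general correlated source such that $\{\frac1n\log\frac1{P_{X^n|Y^n}(X^n|Y^n)}\}_{n\ge1}$ satisfies Condition (W). Then for any $0<\varepsilon\le1$, $\{\frac1n\overline h^\varepsilon(X^n)\}_{n\ge1}$ also satisfies Condition (W).
   Context: A general correlated source $(\mathbf X,\mathbf Y)=\{(X^n,Y^n)\}_{n\ge1}$ is an arbitrary sequence of pairs of random variables on $\mathcal X^n\times\mathcal Y^n$, $\mathcal X,\mathcal Y$ finite or countably infinite (no structural assumptions; marginal probabilities positive). Logs base 2. For $x^n\in\mathcal X^n$ and $\varepsilon\in(0,1]$: $\overline h^\varepsilon(x^n)=\inf\{a\in\mathbb R:\sum_{y^n:\log(1/P_{X^n|Y^n}(x^n|y^n))>a}P_{Y^n|X^n}(y^n|x^n)\le\varepsilon\}$. A sequence of discrete real random variables $\{Z_n\}$ satisfies Condition (W) if: (i) there is $M<\infty$ with $\mathbb E[Z_n]<M$ for all $n$; and (ii) whenever events $\mathcal A_n$ satisfy $\Pr(\mathcal A_n)\to0$, then $\lim_n\mathbb E[|Z_n|\mathbf 1_{\mathcal A_n}]=0$. *)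

From HB Require Import structures.
From mathcomp Require Import all_boot all_order all_algebra.
From mathcomp Require Import all_classical all_reals all_analysis.
Set Implicit Arguments. Unset Strict Implicit. Unset Printing Implicit Defensive.
Import Order.TTheory GRing.Theory Num.Theory.
Import numFieldNormedType.Exports.
Local Open Scope classical_set_scope.
Local Open Scope ring_scope.

Definition log2 {R : realType} (x : R) : R := ln x / ln 2.

Definition condW {d} {R : realType} (T : nat -> measurableType d)
  (P : forall n, probability (T n) R) (Z : forall n, T n -> R) : Prop :=
  (exists M : R, forall n, (0 < n)%N -> ('E_(P n)[Z n] < M%:E)%E) /\
  (forall A : forall n, set (T n), (forall n, measurable (A n)) ->
     (fun n => (P n) (A n)) @ \oo --> 0%E ->
     (fun n => (\int[P n]_(w in A n) (`|Z n w|)%:E)%E) @ \oo --> 0%E).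

Section source.
Local Unset Implicit Arguments.
Context {d} {R : realType} {A B : countType} {T : nat -> measurableType d}
  (P : forall n, probability (T n) R)
  (X : forall n, T n -> n.-tuple A) (Y : forall n, T n -> n.-tuple B).

Definition pXY n (x : n.-tuple A) (y : n.-tuple B) : R :=
  fine ((P n) (X n @^-1` [set x] `&` Y n @^-1` [set y])).
Definition pX n (x : n.-tuple A) : R := fine ((P n) (X n @^-1` [set x])).
Definition pY n (y : n.-tuple B) : R := fine ((P n) (Y n @^-1` [set y])).

Definition pXgY n (x : n.-tuple A) (y : n.-tuple B) : R := pXY n x y / pY n y.
Definition pYgX n (y : n.-tuple B) (x : n.-tuple A) : R := pXY n x y / pX n x.

Definition hbar (eps : R) n (x : n.-tuple A) : R :=
  inf [set a : R | (\esum_(y in [set y : n.-tuple B | (log2 (pXgY n x y)^-1 > a)%R])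
                      (pYgX n y x)%:E <= eps%:E)%E].

Definition info_XgY n (w : T n) : R :=
  n%:R^-1 * log2 (pXgY n (X n w) (Y n w))^-1.
Definition hbar_rv (eps : R) n (w : T n) : R := n%:R^-1 * hbar eps n (X n w).

End source.

(* Write Z_n = (1/n) log 1/P(X^n|Y^n) and G_n(x) = E[Z_n | X^n = x].  Markov's
   inequality for the conditional law of Y^n given X^n = x bounds the quantile
   h^eps(x) by (n G_n(x) + 1)/eps, so (1/n) h^eps(X^n) <= (G_n(X^n) + 1)/eps.
   Condition (W) passes from Z_n to G_n(X^n): the set where G_n(X^n) exceeds a
   level is X^n-measurable, so over it G_n(X^n) and Z_n have the same integral, and
   below the level G_n(X^n) is bounded.  Finally, Condition (W) is inherited by
   nonnegative sequences dominated by an affine function of a sequence satisfying it. *)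

From Pilot Require Import Defs.
From HB Require Import structures.
From mathcomp Require Import all_boot all_order all_algebra.
From mathcomp Require Import all_classical all_reals all_analysis.
From mathcomp Require Import measurable_realfun ring lra.
Import Order.TTheory GRing.Theory Num.Theory.
Import numFieldNormedType.Exports.
Local Open Scope classical_set_scope.
Local Open Scope ring_scope.

Lemma esumZl (R : realType) (I : choiceType) (S : set I) (r : R) (a : I -> \bar R) :
  0 <= r -> (forall i, (0 <= a i)%E) ->
  (\esum_(i in S) (r%:E * a i) = r%:E * \esum_(i in S) a i)%E.
Proof.
move=> r0 a0; rewrite /esum -ereal_supZl //; last first.
  by apply/set0P; exists 0%E; exists set0; [exact: fsets_set0|rewrite fsbig_set0].
rewrite image_comp; congr ereal_sup; apply: eq_imagel => F _ /=.
by rewrite ge0_mule_fsumr.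
Qed.

Lemma le_esum_subset (R : realType) (I : choiceType) (S1 S2 : set I)
    (a : I -> \bar R) :
  S1 `<=` S2 -> (forall i, (0 <= a i)%E) ->
  (\esum_(i in S1) a i <= \esum_(i in S2) a i)%E.
Proof.
move=> S12 a0; rewrite esum_mkcond [leRHS]esum_mkcond.
apply: le_esum => i _; case: ifPn => [/set_mem/S12 iS2|_].
  by rewrite ifT // inE.
by case: ifP.
Qed.

Section countable_valued.
Context {d} {T : measurableType d} {R : realType} {I : countType} {g : T -> I}.
Hypothesis mg : forall i, measurable (g @^-1` [set i]).

Lemma measurable_preimage_countable (S : set I) : measurable (g @^-1` S).
Proof.
have -> : g @^-1` S = \bigcup_(i in S) g @^-1` [set i].
  by apply/seteqP; split=> [w Sw|w [i Si /= ->]] //; exists (g w).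
rewrite bigcup_mkcond; apply: countable_bigcupT_measurable; first exact: countableP.
by move=> i; case: ifP => _; [exact: mg|exact: measurable0].
Qed.

Lemma measurable_fun_countable {d'} {U : sigmaRingType d'} (f : I -> U)
    (D : set T) :
  measurable D -> measurable_fun D (fun t => f (g t)).
Proof.
move=> mD _ V _.
exact: measurableI mD (measurable_preimage_countable (f @^-1` V)).
Qed.

Lemma ge0_integral_preimage_esum (mu : {measure set T -> \bar R}) (D : set T)
    (S : set I) (f : T -> \bar R) :
  measurable D -> measurable_fun (D `&` g @^-1` S) f -> (forall w, (0 <= f w)%E) ->
  (\int[mu]_(w in D `&` g @^-1` S) f w =
   \esum_(i in S) \int[mu]_(w in D `&` g @^-1` [set i]) f w)%E.
Proof.
move=> mD mf f0.
pose F k := D `&` g @^-1` [set i | S i /\ pickle i = k].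
have FE : \bigcup_k F k = D `&` g @^-1` S.
  apply/seteqP; split=> [w [k _ [Dw [Sw _]]]|w [Dw Sw]] //.
  by exists (pickle (g w)) => //; split.
have mF k : measurable (F k).
  exact: measurableI mD (measurable_preimage_countable _).
have tF : trivIset setT F by move=> k l _ _ [w [[_ [_ <-]] [_ [_ <-]]]].
rewrite -FE ge0_integral_bigcup ?FE // nneseries_esumT; last first.
  by move=> k; apply: integral_ge0.
have F_pickle i : S i -> F (pickle i) = D `&` g @^-1` [set i].
  move=> Si; apply/seteqP; split=> [w [Dw [_ /(pcan_inj pickleK) gwE]]|w [Dw gwE]].
    by split.
  by split; rewrite //= gwE.
transitivity (\esum_(k in pickle @` S) \int[mu]_(w in F k) f w)%E.
  rewrite [RHS]esum_mkcond; apply: eq_esum => k _; case: ifPn => // /negP kS.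
  suff -> : F k = set0 by rewrite integral_set0.
  by apply/seteqP; split=> // w [_ [Sw kE]]; apply: kS; rewrite inE; exists (g w).
rewrite esum_image; last by move=> i j _ _; exact: (pcan_inj pickleK).
by apply: eq_esum => i Si; rewrite F_pickle.
Qed.

End countable_valued.

Section truncation.
Context {d} {T : measurableType d} {R : realType} (mu : {measure set T -> \bar R})
  (h : T -> \bar R).
Hypotheses (mh : measurable_fun setT h) (h_ge0 : forall w, (0 <= h w)%E).

Lemma integral_le_truncate (A B : set T) (K : R) :
  measurable A -> measurable B -> 0 <= K -> (forall w, ~ B w -> (h w <= K%:E)%E) ->
  (\int[mu]_(w in A) h w <= \int[mu]_(w in B) h w + K%:E * mu A)%E.
Proof.
move=> mA mB K_ge0 h_le.
have mAB := measurableI _ _ mA mB; have mAnB := measurableD mA mB.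
rewrite -{1}(setUIDK A B) ge0_integral_setU //; last 2 first.
- by rewrite setUIDK; apply: measurable_funS mh.
- by apply/disj_setPS => w [[_ Bw] [_ nBw]].
apply: leeD.
  by apply: ge0_subset_integral => //; apply: measurable_funS mh.
apply: (@le_trans _ _ (\int[mu]_(w in A `\` B) K%:E)%E).
  apply: ge0_le_integral => //; first by apply: measurable_funS mh.
  by move=> w [_]; exact: h_le.
rewrite integral_cst // lee_wpmul2l ?lee_fin //.
by apply: le_measure; rewrite ?inE //; exact: subDsetl.
Qed.

Lemma le_integral_markov (B : set T) (K : R) :
  measurable B -> 0 <= K -> (forall w, B w -> (K%:E <= h w)%E) ->
  (K%:E * mu B <= \int[mu]_w h w)%E.
Proof.
move=> mB K_ge0 h_ge; rewrite -integral_cst //.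
apply: le_trans (ge0_subset_integral _ _ _ _ _ (subsetT B)) => //.
by apply: ge0_le_integral => //; apply: measurable_funS mh.
Qed.

End truncation.

Section condition_W.
Context {d} {R : realType} {T : nat -> measurableType d}
  (P : forall n, probability (T n) R).

Lemma ge0_integral_affine n (D : set (T n)) (c : R) (U : T n -> R) :
  measurable D -> 0 <= c -> (forall w, 0 <= U w) -> measurable_fun D U ->
  (\int[P n]_(w in D) (c * (U w + 1))%:E =
   c%:E * (\int[P n]_(w in D) (U w)%:E + P n D))%E.
Proof.
move=> mD c0 U0 mU; have mEU := measurableT_comp (@EFin_measurable R setT) mU.
under eq_integral do rewrite EFinM EFinD.
rewrite ge0_integralZl //; last 2 first.
- exact: emeasurable_funD.
- by move=> w _; rewrite lee_fin addr_ge0.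
by rewrite ge0_integralD // ?integral_cst ?mul1e // => w _; rewrite lee_fin.
Qed.

Lemma condW_le (U V : forall n, T n -> R) (c : R) :
  (forall n, measurable_fun setT (U n)) -> (forall n, measurable_fun setT (V n)) ->
  (forall n w, 0 <= U n w) -> (forall n w, 0 <= V n w) -> 0 <= c ->
  (forall n w, (0 < n)%N -> V n w <= c * (U n w + 1)) ->
  condW P U -> condW P V.
Proof.
move=> mU mV U0 V0 c0 VU [[M EU] UIU].
have le_int n D : (0 < n)%N -> measurable D ->
    (\int[P n]_(w in D) (`|V n w|)%:E <=
     c%:E * (\int[P n]_(w in D) (`|U n w|)%:E + P n D))%E.
  move=> n0 mD; rewrite [X in (_ <= _ * (X + _))%E](_ : _ =
    \int[P n]_(w in D) (U n w)%:E)%E; last first.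
    by apply: eq_integral => w _; rewrite ger0_norm.
  rewrite -ge0_integral_affine //; last exact: measurable_funS (mU n).
  apply: ge0_le_integral => //.
  - apply/measurable_EFinP; apply: measurableT_comp => //.
    exact: measurable_funS (mV n).
  - apply/measurable_EFinP; apply: measurable_funM => //.
    by apply: measurable_funD => //; exact: measurable_funS (mU n).
  - by move=> w _; rewrite lee_fin ger0_norm // VU.
split.
  exists (c * (M + 1) + 1) => n n0; rewrite unlock.
  apply: (@le_lt_trans _ _ (c * (M + 1))%:E); last by rewrite lte_fin ltrDl.
  rewrite (eq_integral (fun w => (`|V n w|)%:E)); last first.
    by move=> w _; rewrite ger0_norm.
  apply: le_trans (le_int n setT n0 measurableT) _.
  rewrite probability_setT EFinM lee_wpmul2l ?lee_fin // EFinD leeD2r //.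
  under eq_integral do rewrite ger0_norm //.
  by have := EU n n0; rewrite unlock => /ltW.
move=> A mA PA0.
apply: (@squeeze_cvge _ _ _ _ (cst 0%E) _
  (fun n => c%:E * (\int[P n]_(w in A n) (`|U n w|)%:E + P n (A n)))%E).
- by near=> n; rewrite integral_ge0 //= le_int //; near: n; exists 1%N.
- exact: cvg_cst.
- rewrite -(mule0 c%:E); apply: cvgeZl => //; rewrite -[0%E]adde0.
  by apply: cvgeD => //; exact: UIU.
Unshelve. all: by end_near.
Qed.

(* The integral hypothesis says that [g n \o X n] is a version of the conditional
   expectation of [Z n] given [X n]. *)
Lemma condW_condexp {I : nat -> countType} (X : forall n, T n -> I n)
    (g : forall n, I n -> R) (Z : forall n, T n -> R) :
  (forall n i, measurable (X n @^-1` [set i])) ->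
  (forall n x, 0 <= g n x) -> (forall n w, 0 <= Z n w) ->
  (forall n S, (0 < n)%N ->
     \int[P n]_(w in X n @^-1` S) (g n (X n w))%:E =
     \int[P n]_(w in X n @^-1` S) (Z n w)%:E)%E ->
  condW P Z -> condW P (fun n w => g n (X n w)).
Proof.
move=> mX g0 Z0 gZ [[M EZ] UIZ].
have mgX n : measurable_fun setT (fun w => (g n (X n w))%:E).
  exact (measurable_fun_countable (mX n) (fun x => (g n x)%:E) _ measurableT).
have gX_ge0 n w : (0 <= (g n (X n w))%:E)%E by rewrite lee_fin.
have int_gX n : (0 < n)%N -> (\int[P n]_w (g n (X n w))%:E < M%:E)%E.
  move=> n0; have := gZ n setT n0; rewrite preimage_setT => ->.
  by have := EZ n n0; rewrite unlock.
split; first by exists M => n n0; rewrite unlock; exact: int_gX.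
move=> A mA PA0.
set p := fun n => fine (P n (A n)).
have p_cvg0 : p @ \oo --> 0 by apply: (@fine_cvg _ _ _ _ _ 0).
set q := fun n => Num.sqrt (p n + n.+1%:R^-1).
have q_gt0 n : 0 < q n by rewrite sqrtr_gt0 ltr_wpDl ?fine_ge0 ?measure_ge0.
have q_cvg0 : q @ \oo --> 0.
  rewrite -sqrtr0; apply: (continuous_cvg _ (@sqrt_continuous R 0)).
  by rewrite -[0 : R]addr0; apply: cvgD => //; exact: cvg_harmonic.
have p_le_qq n : p n <= q n * q n.
  by rewrite -expr2 sqr_sqrtr ?addr_ge0 ?fine_ge0 ?measure_ge0 // lerDl.
(* Truncation at level 1/q n: above it Markov's inequality gives P(B n) <= M q n,
   below it the contribution over A n is at most p n / q n <= q n. *)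
set B := fun n => X n @^-1` [set x | (q n)^-1 < g n x].
have mB n : measurable (B n) by exact: measurable_preimage_countable.
have PB n : (0 < n)%N -> (P n (B n) <= (M * q n)%:E)%E.
  move=> n0; have fPB : P n (B n) \is a fin_num.
    by apply: fin_num_measure; exact: mB.
  rewrite -(fineK fPB) lee_fin -ler_pdivrMr // mulrC -lee_fin EFinM (fineK fPB).
  apply/ltW/(le_lt_trans _ (int_gX n n0)).
  by apply: le_integral_markov => //; [rewrite invr_ge0 ltW|move=> w /ltW].
have PB_cvg0 : (fun n => P n (B n)) @ \oo --> 0%E.
  apply: (@squeeze_cvge _ _ _ _ (cst 0%E) _ (fun n => (M * q n)%:E)).
  - by near=> n; rewrite measure_ge0 /= PB //; near: n; exists 1%N.
  - exact: cvg_cst.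
  - apply/fine_cvgP; split; first by near=> n.
    by rewrite -(mulr0 M); apply: cvgM => //; exact: cvg_cst.
have bound n : (0 < n)%N -> (\int[P n]_(w in A n) (`|g n (X n w)|)%:E <=
    \int[P n]_(w in B n) (`|Z n w|)%:E + (q n)%:E)%E.
  move=> n0; under eq_integral do rewrite ger0_norm //.
  under [X in (_ <= X + _)%E]eq_integral do rewrite ger0_norm //.
  have K_ge0 : 0 <= (q n)^-1 by rewrite invr_ge0 ltW.
  have le_K w : ~ B n w -> ((g n (X n w))%:E <= ((q n)^-1)%:E)%E.
    by move=> /negP; rewrite -leNgt lee_fin.
  apply: le_trans (integral_le_truncate (P n) _ (mgX n) (gX_ge0 n) _ _ _ (mA n) (mB n)
    K_ge0 le_K) _.
  rewrite -gZ // leeD2l //.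
  rewrite -[X in (_ * X <= _)%E]fineK; last by apply: fin_num_measure; exact: mA.
  by rewrite -EFinM lee_fin ler_pdivrMl //; exact: p_le_qq.
apply: (@squeeze_cvge _ _ _ _ (cst 0%E) _
  (fun n => \int[P n]_(w in B n) (`|Z n w|)%:E + (q n)%:E)%E).
- by near=> n; rewrite integral_ge0 //= bound //; near: n; exists 1%N.
- exact: cvg_cst.
- rewrite -[0%E]adde0; apply: cvgeD => //; first exact: UIZ.
  by apply/fine_cvgP; split; [near=> n|].
Unshelve. all: by end_near.
Qed.

End condition_W.

Section source.
Context {d} {R : realType} {A B : countType} {T : nat -> measurableType d}
  (P : forall n, probability (T n) R)
  (X : forall n, T n -> n.-tuple A) (Y : forall n, T n -> n.-tuple B).
Hypothesis mX : forall n (x : n.-tuple A), measurable (X n @^-1` [set x]).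
Hypothesis mY : forall n (y : n.-tuple B), measurable (Y n @^-1` [set y]).
Hypothesis pX_gt0 : forall n (x : n.-tuple A), 0 < pX P X n x.
Hypothesis pY_gt0 : forall n (y : n.-tuple B), 0 < pY P Y n y.

Local Notation pXY := (pXY P X Y).
Local Notation pX := (pX P X).
Local Notation pY := (pY P Y).
Local Notation pXgY := (pXgY P X Y).
Local Notation pYgX := (pYgX P X Y).
Local Notation info_XgY := (info_XgY P X Y).

Let mXY n (xy : n.-tuple A * n.-tuple B) :
  measurable ((fun w => (X n w, Y n w)) @^-1` [set xy]).
Proof.
case: xy => x y; rewrite [X in measurable X](_ : _ =
  X n @^-1` [set x] `&` Y n @^-1` [set y]); first exact: measurableI.
by apply/seteqP; split=> w /=; [case=> -> ->|case=> -> ->].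
Qed.

Let PXY n x y : P n (X n @^-1` [set x] `&` Y n @^-1` [set y]) = (pXY n x y)%:E.
Proof.
by rewrite fineK //; apply: fin_num_measure; exact: measurableI (mX n x) (mY n y).
Qed.

Let PX n x : P n (X n @^-1` [set x]) = (pX n x)%:E.
Proof. by rewrite fineK //; apply: fin_num_measure; exact: mX. Qed.

Lemma pXY_le_pY n x y : pXY n x y <= pY n y.
Proof.
rewrite -lee_fin -PXY fineK; last by apply: fin_num_measure; exact: mY.
apply: le_measure; rewrite ?inE; last exact: subIsetr.
- exact: measurableI (mX n x) (mY n y).
- exact: mY.
Qed.

Lemma pXgY_ge0 n x y : 0 <= pXgY n x y.
Proof. by rewrite divr_ge0 ?fine_ge0 ?measure_ge0 // ltW. Qed.

Lemma pXgY_le1 n x y : pXgY n x y <= 1.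
Proof. by rewrite ler_pdivrMr // mul1r pXY_le_pY. Qed.

Definition self_info n x y : R := log2 (pXgY n x y)^-1.

Lemma self_info_ge0 n x y : 0 <= self_info n x y.
Proof.
rewrite /self_info /log2 divr_ge0 //; last by rewrite ltW // ln_gt0 // ltr1n.
have [->|p_neq0] := eqVneq (pXgY n x y) 0; first by rewrite invr0 ln0.
by rewrite ln_ge0 // invf_ge1 ?pXgY_le1 // lt_def p_neq0 pXgY_ge0.
Qed.

Let measurable_info n (D : set (T n)) : measurable D ->
  measurable_fun D (fun w => (info_XgY n w)%:E).
Proof.
exact (measurable_fun_countable (mXY n)
  (fun xy => (n%:R^-1 * self_info n xy.1 xy.2)%:E) D).
Qed.

Lemma integral_fibre_comp_X n x (h : n.-tuple A -> \bar R) :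
  (\int[P n]_(w in X n @^-1` [set x]) h (X n w) = h x * (pX n x)%:E)%E.
Proof.
by rewrite -PX -integral_cst //; apply: eq_integral => w /set_mem ->.
Qed.

Lemma integral_fibre_comp_Y n x (f : n.-tuple B -> R) : (forall y, 0 <= f y) ->
  (\int[P n]_(w in X n @^-1` [set x]) (f (Y n w))%:E =
   \esum_(y in [set: n.-tuple B]) (f y * pXY n x y)%:E)%E.
Proof.
move=> f0; rewrite -[X n @^-1` _]setIT -(preimage_setT (Y n)).
rewrite ge0_integral_preimage_esum //; last 2 first.
- apply: (measurable_fun_countable (mY n) (fun y => (f y)%:E)).
  exact: measurableI (mX n x) (measurable_preimage_countable (mY n) _).
- by move=> w; rewrite lee_fin.
apply: eq_esum => y _; rewrite EFinM -PXY -integral_cst; last first.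
  exact: measurableI (mX n x) (mY n y).
by apply: eq_integral => w /set_mem [_ /= ->].
Qed.

Lemma esum_pXY n x : (\esum_(y in [set: n.-tuple B]) (pXY n x y)%:E = (pX n x)%:E)%E.
Proof.
rewrite -[RHS]mul1e -(integral_fibre_comp_X n x (fun=> 1%E)).
rewrite (integral_fibre_comp_Y n x (fun=> 1)) //.
by apply: eq_esum => y _; rewrite mul1r.
Qed.

Lemma esum_pYgX n x : (\esum_(y in [set: n.-tuple B]) (pYgX n y x)%:E = 1)%E.
Proof.
transitivity (\esum_(y in [set: n.-tuple B]) ((pX n x)^-1%:E * (pXY n x y)%:E))%E.
  by apply: eq_esum => y _; rewrite -EFinM mulrC.
rewrite esumZl; last 2 first.
- by rewrite invr_ge0 ltW.
- by move=> y; rewrite lee_fin fine_ge0 ?measure_ge0.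
by rewrite esum_pXY -EFinM mulVf // gt_eqF.
Qed.

Definition cond_self_info n x : \bar R :=
  \esum_(y in [set: n.-tuple B]) (pYgX n y x * self_info n x y)%:E.

Lemma pYgX_ge0 n y x : 0 <= pYgX n y x.
Proof. by rewrite divr_ge0 ?fine_ge0 ?measure_ge0 // ltW. Qed.

Lemma cond_self_info_ge0 n x : (0 <= cond_self_info n x)%E.
Proof.
by apply: esum_ge0 => y _; rewrite lee_fin mulr_ge0 ?pYgX_ge0 ?self_info_ge0.
Qed.

Lemma esum_pYgX_self_info_gt n (x : n.-tuple A) (a : R) : a < 0 ->
  (\esum_(y in [set y | (a < self_info n x y)%R]) (pYgX n y x)%:E = 1)%E.
Proof.
move=> a_lt0; rewrite -(esum_pYgX n x); congr esum.
by apply/seteqP; split=> // y _; exact: lt_le_trans a_lt0 (self_info_ge0 n x y).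
Qed.

Lemma hbar_ge0 eps n x : 0 <= hbar P X Y eps n x.
Proof.
rewrite /hbar; set E := [set a : R | _].
have [[E_neq0 [b lbE]]|noinf] := pselect (has_inf E); last by rewrite inf_out.
apply: lb_le_inf => // a Ea; rewrite leNgt; apply/negP => a_lt0.
have b_lt0 : b - 1 < 0 by have := lbE a Ea; lra.
have : E (b - 1) by move: Ea; rewrite /E /= !esum_pYgX_self_info_gt.
by move=> /lbE; lra.
Qed.

(* Markov's inequality for the conditional law of [Y^n] given [X^n = x]. *)
Lemma hbar_le_cond_self_info n x eps g : 0 < eps -> cond_self_info n x = g%:E ->
  hbar P X Y eps n x <= (g + 1) / eps.
Proof.
move=> eps_gt0 gE; rewrite /hbar; set E := [set a : R | _].
have g_ge0 : 0 <= g by rewrite -lee_fin -gE cond_self_info_ge0.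
set a0 := (g + 1) / eps.
have a0_gt0 : 0 < a0 by rewrite divr_gt0 // ltr_wpDl.
have Ea0 : E a0.
  rewrite /E /=; apply: (@le_trans _ _
    (\esum_(y in [set y | (a0 < self_info n x y)%R])
      (a0^-1%:E * (pYgX n y x * self_info n x y)%:E))%E).
    apply: le_esum => y /= a0_lt; rewrite -EFinM lee_fin mulrCA.
    rewrite -[leLHS]mulr1 ler_wpM2l ?pYgX_ge0 //.
    by rewrite ler_pdivlMl // mulr1 ltW.
  rewrite esumZl; last 2 first.
  - by rewrite invr_ge0 ltW.
  - by move=> y; rewrite lee_fin mulr_ge0 ?pYgX_ge0 ?self_info_ge0.
  apply: (@le_trans _ _ (a0^-1%:E * cond_self_info n x))%E.
    apply: lee_wpmul2l; first by rewrite lee_fin invr_ge0 ltW.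
    apply: le_esum_subset => // y.
    by rewrite lee_fin mulr_ge0 ?pYgX_ge0 ?self_info_ge0.
  rewrite gE -EFinM lee_fin /a0 invf_div mulrAC ler_pdivrMr; [nra|lra].
have [[_ lbE]|noinf] := pselect (has_inf E); first exact: ge_inf lbE _ Ea0.
by rewrite inf_out // ltW.
Qed.

Lemma integral_cond_self_info n S :
  (\int[P n]_(w in X n @^-1` S) ((n%:R^-1)%:E * cond_self_info n (X n w)) =
   \int[P n]_(w in X n @^-1` S) (info_XgY n w)%:E)%E.
Proof.
have mXS : measurable (setT `&` X n @^-1` S).
  by rewrite setTI; exact: measurable_preimage_countable.
rewrite -[X n @^-1` S]setTI !ge0_integral_preimage_esum //; last 4 first.
- exact: measurable_info.
- by move=> w; rewrite lee_fin mulr_ge0 ?invr_ge0 ?self_info_ge0.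
- exact (measurable_fun_countable (mX n)
    (fun x => ((n%:R^-1)%:E * cond_self_info n x)%E) _ mXS).
- by move=> w; rewrite mule_ge0 ?lee_fin ?invr_ge0 ?cond_self_info_ge0.
apply: eq_esum => x _; rewrite setTI.
rewrite (integral_fibre_comp_X n x (fun x => (n%:R^-1)%:E * cond_self_info n x)%E).
rewrite (eq_integral (fun w => (n%:R^-1 * self_info n x (Y n w))%:E)); last first.
  by move=> w /set_mem /= <-.
rewrite (integral_fibre_comp_Y n x (fun y => n%:R^-1 * self_info n x y)); last first.
  by move=> y; rewrite mulr_ge0 ?invr_ge0 ?self_info_ge0.
rewrite muleAC -EFinM -esumZl; last 2 first.
- by rewrite mulr_ge0 ?invr_ge0 // ltW.
- by move=> y; rewrite lee_fin mulr_ge0 ?pYgX_ge0 ?self_info_ge0.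
apply: eq_esum => y _; rewrite -EFinM; congr EFin.
by rewrite /Defs.pYgX; move: (n%:R^-1) => k; field; rewrite gt_eqF.
Qed.

Lemma info_XgY_ge0 n w : 0 <= info_XgY n w.
Proof. by rewrite mulr_ge0 ?invr_ge0 ?self_info_ge0. Qed.

Lemma cond_self_info_fin_num n x : (0 < n)%N ->
  (\int[P n]_w (info_XgY n w)%:E < +oo)%E -> cond_self_info n x \is a fin_num.
Proof.
move=> n0 intZ_fin; have := integral_cond_self_info n [set x].
rewrite (integral_fibre_comp_X n x (fun x => (n%:R^-1)%:E * cond_self_info n x)%E).
have := cond_self_info_ge0 n x; case: (cond_self_info n x) => [//| _ |//].
rewrite gt0_muley ?lte_fin ?invr_gt0 ?ltr0n // gt0_mulye ?lte_fin // => int_oo.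
have : (\int[P n]_(w in X n @^-1` [set x]) (info_XgY n w)%:E <=
        \int[P n]_w (info_XgY n w)%:E)%E.
  apply: ge0_subset_integral => //.
  - exact: measurable_info.
  - by move=> w _; rewrite lee_fin info_XgY_ge0.
by rewrite -int_oo leye_eq => /eqP oo; move: intZ_fin; rewrite oo ltxx.
Qed.

Definition cond_info n x : R := n%:R^-1 * fine (cond_self_info n x).

Lemma cond_info_ge0 n x : 0 <= cond_info n x.
Proof. by rewrite mulr_ge0 ?invr_ge0 ?fine_ge0 ?cond_self_info_ge0. Qed.

Lemma integral_cond_info n S : (0 < n)%N ->
  (\int[P n]_w (info_XgY n w)%:E < +oo)%E ->
  (\int[P n]_(w in X n @^-1` S) (cond_info n (X n w))%:E =
   \int[P n]_(w in X n @^-1` S) (info_XgY n w)%:E)%E.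
Proof.
move=> n0 intZ_fin; rewrite -integral_cond_self_info.
by apply: eq_integral => w _; rewrite EFinM fineK // cond_self_info_fin_num.
Qed.

Lemma hbar_rv_le_cond_info eps n w : (0 < n)%N -> 0 < eps ->
  (\int[P n]_w (info_XgY n w)%:E < +oo)%E ->
  hbar_rv P X Y eps n w <= eps^-1 * (cond_info n (X n w) + 1).
Proof.
move=> n0 eps_gt0 intZ_fin.
have /fineK gE := cond_self_info_fin_num n (X n w) n0 intZ_fin.
have := hbar_le_cond_self_info n (X n w) eps _ eps_gt0 (esym gE).
have := fine_ge0 (cond_self_info_ge0 n (X n w)).
have k_gt0 : 0 < n%:R^-1 :> R by rewrite invr_gt0 ltr0n.
have k_le1 : n%:R^-1 <= 1 :> R by rewrite invf_le1 ?ltr0n // ler1n.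
have e_gt0 : 0 < eps^-1 by rewrite invr_gt0.
rewrite /hbar_rv /cond_info; move: k_gt0 k_le1 e_gt0.
move: (n%:R^-1) (eps^-1) (fine _) (hbar _ _ _ _ _ _) => k e g h; nra.
Qed.

End source.

Theorem lemma2 (d : measure_display) (R : realType) (A B : countType)
  (T : nat -> measurableType d) (P : forall n, probability (T n) R)
  (X : forall n, T n -> n.-tuple A) (Y : forall n, T n -> n.-tuple B)
  (mX : forall n (x : n.-tuple A), measurable (X n @^-1` [set x]))
  (mY : forall n (y : n.-tuple B), measurable (Y n @^-1` [set y]))
  (pX_gt0 : forall n (x : n.-tuple A), 0 < pX P X n x)
  (pY_gt0 : forall n (y : n.-tuple B), 0 < pY P Y n y)
  (HW : condW P (info_XgY P X Y)) (eps : R) (eps_gt0 : 0 < eps) (eps_le1 : eps <= 1) :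
  condW P (hbar_rv P X Y eps).
Proof.
have [[M EZ] _] := HW.
have intZ_fin n : (0 < n)%N -> (\int[P n]_w (info_XgY P X Y n w)%:E < +oo)%E.
  by move=> n0; apply: lt_trans (ltry M); have := EZ n n0; rewrite unlock.
have mfX n (f : n.-tuple A -> R) : measurable_fun setT (fun w => f (X n w)).
  exact (measurable_fun_countable (mX n) f _ measurableT).
apply: (condW_le P (fun n w => cond_info P X Y n (X n w)) _ eps^-1).
- by move=> n; exact: mfX.
- by move=> n; exact: mfX (fun x => n%:R^-1 * hbar P X Y eps n x).
- by move=> n w; exact: (cond_info_ge0 P X Y mX mY pY_gt0).
- by move=> n w; rewrite mulr_ge0 ?invr_ge0 ?(hbar_ge0 P X Y mX mY pX_gt0 pY_gt0).
- by rewrite invr_ge0 ltW.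
- move=> n w n0.
  exact: (hbar_rv_le_cond_info P X Y mX mY pX_gt0 pY_gt0 _ _ _ n0 eps_gt0
    (intZ_fin n n0)).
apply: (condW_condexp P X (cond_info P X Y)) HW => //.
- exact: (cond_info_ge0 P X Y mX mY pY_gt0).
- exact: (info_XgY_ge0 P X Y mX mY pY_gt0).
- move=> n S n0.
  exact: (integral_cond_info P X Y mX mY pX_gt0 pY_gt0 n S n0 (intZ_fin n n0)).
Qed.
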